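(* Let $m$ and $k$ be positive integers such that $2m-1<R(m-k,3)$ and $m\ge k+3$. Then $F_v(2_r;r-k+1)\le r+m$ for every integer $r\ge m-1$.
   Context: All graphs are finite, simple and undirected. $\mathrm{cl}(G)$ is the clique number of $G$. $G\overset{v}{\to}(2_r)$ means that in every partition of $V(G)$ into $r$ pairwise disjoint parts some part contains an edge (equivalently $\chi(G)\ge r+1$). $H_v(2_r;q)$ is the set of graphs $G$ with $G\overset{v}{\to}(2_r)$ and $\mathrm{cl}(G)<q$; $F_v(2_r;q)=\min\{|V(G)|:G\in H_v(2_r;q)\}$. The Ramsey number $R(p,3)$ is the least $n$ such that every graph on at least $n$ vertices has a $p$-clique or an independent set of size $3$. *)

(* Finite simple graphs as symmetric irreflexive relations on a finType. *)
From mathcomp Require Import all_boot.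
Set Implicit Arguments. Unset Strict Implicit. Unset Printing Implicit Defensive.

Section Graphs.
Variable T : finType.

Definition simple_graph (e : rel T) : Prop := symmetric e /\ irreflexive e.

Definition cliqueb (e : rel T) (A : {set T}) : bool :=
  [forall x in A, forall y in A, (x != y) ==> e x y].
Definition indepb (e : rel T) (A : {set T}) : bool :=
  [forall x in A, forall y in A, ~~ e x y].

Definition clique_number (e : rel T) : nat :=
  \max_(A : {set T} | cliqueb e A) #|A|.

(* G -v-> (2_r): in every partition of V(G) into r (possibly empty) pairwise
   disjoint parts, given by the part-index function f, some part contains an edge *)
Definition vertex_arrow2 (r : nat) (e : rel T) : Prop :=
  forall f : T -> 'I_r, exists x y : T, e x y && (f x == f y).

Definition in_Hv (r q : nat) (e : rel T) : Prop :=
  [/\ simple_graph e, vertex_arrow2 r e & clique_number e < q].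
End Graphs.

(* F_v(2_r; q) <= b : some graph of H_v(2_r; q) has at most b vertices
   (graphs on n vertices are represented on vertex set 'I_n) *)
Definition Fv_le (r q b : nat) : Prop :=
  exists n : nat, n <= b /\ exists e : rel 'I_n, in_Hv r q e.

Definition ramsey3_prop (p n : nat) : Prop :=
  forall N : nat, n <= N -> forall e : rel 'I_N, simple_graph e ->
    (exists A : {set 'I_N}, cliqueb e A && (#|A| == p)) \/
    (exists A : {set 'I_N}, indepb e A && (#|A| == 3)).

Definition is_ramsey3 (p R : nat) : Prop :=
  ramsey3_prop p R /\ forall n, ramsey3_prop p n -> R <= n.

From mathcomp Require Import all_boot zify.
From Stdlib Require Import Classical.
Set Implicit Arguments. Unset Strict Implicit. Unset Printing Implicit Defensive.

(* Since 2m-1 < R(m-k,3), the Ramsey property fails at 2m-1, which yields a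
   graph G on exactly 2m-1 vertices with cl(G) < m-k and alpha(G) < 3.  The
   witness graph is the join K_a + G with a = r+1-m, on a + 2m-1 <= r+m
   vertices:
   - cl(K_a + G) <= a + cl(G) < r-k+1;
   - in a proper colouring of K_a + G with a + c colours, the complete part
     uses a colours that are absent from G, so G is properly coloured with c
     colours; each colour class of G is independent, hence of size <= 2, so
     |G| <= 2c. *)

Section CliquesAndIndependentSets.
Variable T : finType.
Implicit Types (e : rel T) (A B : {set T}).

Lemma cliqueP e A :
  reflect (forall x y, x \in A -> y \in A -> x != y -> e x y) (cliqueb e A).
Proof.
apply: (iffP forall_inP) => [H x y xA yA | H x xA].
  by move/forall_inP/(_ y yA)/implyP: (H x xA).
by apply/forall_inP => y yA; apply/implyP; apply: H.
Qed.

Lemma indepP e A :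
  reflect (forall x y, x \in A -> y \in A -> ~~ e x y) (indepb e A).
Proof.
apply: (iffP forall_inP) => [H x y xA yA | H x xA].
  by move/forall_inP/(_ y yA): (H x xA).
by apply/forall_inP => y yA; apply: H.
Qed.

Lemma clique_subset e A B : B \subset A -> cliqueb e A -> cliqueb e B.
Proof.
by move=> /subsetP sBA /cliqueP cA; apply/cliqueP => x y /sBA xA /sBA; apply: cA.
Qed.

Lemma indep_subset e A B : B \subset A -> indepb e A -> indepb e B.
Proof.
by move=> /subsetP sBA /indepP iA; apply/indepP => x y /sBA xA /sBA; apply: iA.
Qed.

Lemma subset_of_card A n : n <= #|A| -> exists2 B : {set T}, B \subset A & #|B| = n.
Proof.
case/card_geqP => s [uniq_s size_s sA]; exists [set x in s].
  by apply/subsetP => x; rewrite inE => /sA.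
by rewrite cardsE (card_uniqP uniq_s).
Qed.

Lemma clique_le_clique_number e A : cliqueb e A -> #|A| <= clique_number e.
Proof. exact: leq_bigmax_cond. Qed.

Lemma clique_number_lt e w :
  (forall A, cliqueb e A -> #|A| < w) -> clique_number e < w.
Proof.
move=> cl_lt; have w_gt0 : 0 < w.
  have clique0 : cliqueb e set0 by apply/cliqueP => x y; rewrite inE.
  by move: (cl_lt _ clique0); rewrite cards0.
rewrite -(prednK w_gt0) ltnS; apply/bigmax_leqP => A cA.
by rewrite -ltnS prednK // cl_lt.
Qed.

End CliquesAndIndependentSets.

Section Pullback.
Variables (T1 T2 : finType) (g : T1 -> T2) (e : rel T2).
Hypothesis g_inj : injective g.

Lemma clique_pullback (A : {set T1}) :
  cliqueb (relpre g e) A -> cliqueb e (g @: A) /\ #|g @: A| = #|A|.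
Proof.
move=> /cliqueP cA; split; last exact: card_imset.
apply/cliqueP => _ _ /imsetP[x xA ->] /imsetP[y yA ->] gxy.
by apply: cA => //; apply: contra gxy => /eqP ->.
Qed.

Lemma indep_pullback (A : {set T1}) :
  indepb (relpre g e) A -> indepb e (g @: A) /\ #|g @: A| = #|A|.
Proof.
move=> /indepP iA; split; last exact: card_imset.
by apply/indepP => _ _ /imsetP[x xA ->] /imsetP[y yA ->]; apply: iA.
Qed.

Lemma simple_pullback : simple_graph e -> simple_graph (relpre g e).
Proof. by case=> e_sym e_irr; split => [x y | x] /=; [apply: e_sym | apply: e_irr]. Qed.

Lemma clique_number_pullback : clique_number (relpre g e) <= clique_number e.
Proof.
apply/bigmax_leqP => A /clique_pullback[cA <-].
exact: clique_le_clique_number.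
Qed.

End Pullback.

(* If every independent set of e has at most s vertices, a colouring g with no
   monochromatic edge uses at least #|T|/s colours: each colour class is
   independent. *)
Lemma card_le_colours_indep (T C : finType) (e : rel T) (g : T -> C) (s : nat) :
  (forall A : {set T}, indepb e A -> #|A| <= s) ->
  (forall x y, e x y -> g x != g y) ->
  #|T| <= #|[set g x | x : T]| * s.
Proof.
move=> indep_le proper.
rewrite -[#|T|]sum1_card (partition_big g (mem [set g x | x : T])) /=; last first.
  by move=> x _; apply: imset_f.
rewrite -sum_nat_const; apply: leq_sum => c _; rewrite sum1_card -cardsE.
apply: indep_le; apply/indepP => x y; rewrite !inE => /eqP gx /eqP gy.
by apply/negP => /proper; rewrite gx gy eqxx.
Qed.

Section JoinWithCompleteGraph.
Variables (A B : finType) (e : rel B).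

Definition join_complete : rel (A + B) := fun u v =>
  match u, v with
  | inl x, inl y => x != y
  | inr x, inr y => e x y
  | _, _ => true
  end.

Lemma simple_join : simple_graph e -> simple_graph join_complete.
Proof.
case=> e_sym e_irr; split.
- by case=> [x|x] [y|y] //=; rewrite eq_sym.
- by case=> x /=; rewrite ?eqxx ?e_irr.
Qed.

(* cl(K_A + G) <= #|A| + cl(G): a clique meets A in at most #|A| vertices and
   B in a clique of G. *)
Lemma join_clique_number_lt w :
  (forall S : {set B}, cliqueb e S -> #|S| < w) ->
  clique_number join_complete < #|A| + w.
Proof.
move=> cl_lt; apply: clique_number_lt => K cK.
have sK : K \subset inl @: (inl @^-1: K) :|: inr @: (inr @^-1: K).
  by apply/subsetP => -[x|x] Kx; rewrite !inE; apply/orP;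
    [left | right]; apply: imset_f; rewrite inE.
apply: leq_ltn_trans (subset_leq_card sK) _.
apply: leq_ltn_trans (leq_card_setU _ _) _.
rewrite !card_imset -?addnS; try by move=> ? ? [].
apply: leq_add; first exact: max_card.
apply: cl_lt; apply/cliqueP => x y; rewrite !inE => Kx Ky xy.
by move/cliqueP: cK => /(_ _ _ Kx Ky); apply; apply: contra xy => /eqP[->].
Qed.

Lemma join_vertex_arrow c :
  (forall S : {set B}, indepb e S -> #|S| <= 2) -> c.*2 < #|B| ->
  vertex_arrow2 (#|A| + c) join_complete.
Proof.
move=> indep_le big_B f.
apply: NNPP => no_mono; suff : #|B| <= c.*2 by rewrite leqNgt big_B.
have proper u v : join_complete u v -> f u != f v.
  move=> uv; apply/negP => /eqP fuv.
  by apply: no_mono; exists u, v; rewrite uv fuv eqxx.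
pose colA := [set f (inl x) | x : A].
pose colB := [set f (inr y) | y : B].
have card_colA : #|colA| = #|A|.
  rewrite card_imset ?cardsT // => x y fxy; apply/eqP; apply: contraT => xy.
  by move: (proper (inl x) (inl y) xy); rewrite fxy eqxx.
have colB_sub : colB \subset ~: colA.
  apply/subsetP => _ /imsetP[y _ ->]; rewrite inE; apply/imsetP => -[x _ fxy].
  by move: (proper (inr y) (inl x) isT); rewrite fxy eqxx.
have card_colB : #|colB| <= c.
  have card_compl : #|~: colA| = c.
    by apply/(@addnI #|A|); rewrite -{1}card_colA cardsC card_ord.
  by rewrite -[X in _ <= X]card_compl subset_leq_card.
rewrite -muln2; apply: leq_trans (leq_mul card_colB (leqnn 2)).
exact: card_le_colours_indep indep_le (fun x y => proper (inr x) (inr y)).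
Qed.

End JoinWithCompleteGraph.

Lemma ramsey3_witness p R n : is_ramsey3 p R -> n < R ->
  exists e : rel 'I_n, [/\ simple_graph e,
    forall A : {set 'I_n}, cliqueb e A -> #|A| < p &
    forall A : {set 'I_n}, indepb e A -> #|A| <= 2].
Proof.
move=> [_ R_min] n_lt_R.
have not_ramsey : ~ ramsey3_prop p n by move/R_min; rewrite leqNgt n_lt_R.
have [N [n_le_N [eN [simple_eN no_clique no_indep]]]] :
    exists N, n <= N /\ exists eN : rel 'I_N, [/\ simple_graph eN,
      ~ exists A : {set 'I_N}, cliqueb eN A && (#|A| == p) &
      ~ exists A : {set 'I_N}, indepb eN A && (#|A| == 3)].
  apply: NNPP => none; apply: not_ramsey => N n_le_N eN simple_eN.
  apply: NNPP => /not_or_and[no_clique no_indep].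
  by apply: none; exists N; split; last exists eN.
have widen_inj : injective (widen_ord n_le_N).
  by move=> x y /(congr1 val) eq_val; apply: val_inj.
exists (relpre (widen_ord n_le_N) eN); split.
- exact: simple_pullback.
- move=> A cA; rewrite ltnNge; apply/negP => /subset_of_card[B sBA cardB].
  have [cB card_img] := clique_pullback widen_inj (clique_subset sBA cA).
  by apply: no_clique; exists (widen_ord n_le_N @: B); rewrite cB card_img cardB eqxx.
- move=> A iA; rewrite leqNgt; apply/negP => /subset_of_card[B sBA cardB].
  have [iB card_img] := indep_pullback widen_inj (indep_subset sBA iA).
  by apply: no_indep; exists (widen_ord n_le_N @: B); rewrite iB card_img cardB eqxx.
Qed.

Lemma Fv_le_of_graph (T : finType) (r q b : nat) (e : rel T) :
  #|T| <= b -> in_Hv r q e -> Fv_le r q b.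
Proof.
move=> card_T [simple_e arrow_e cl_lt].
exists #|T|; split => //; exists (relpre enum_val e); split.
- exact: simple_pullback.
- move=> f; have [x [y exy]] := arrow_e (fun x => f (enum_rank x)).
  by exists (enum_rank x), (enum_rank y); rewrite /= !enum_rankK.
- exact: leq_ltn_trans (clique_number_pullback _ enum_val_inj) cl_lt.
Qed.

Theorem theorem2p1 (m k R : nat) :
  0 < m -> 0 < k -> is_ramsey3 (m - k) R -> 2 * m - 1 < R -> k + 3 <= m ->
  forall r : nat, m - 1 <= r -> Fv_le r (r - k + 1) (r + m).
Proof.
move=> m_gt0 _ ramsey lt_R k3_le_m r r_ge.
have [eG [simple_G clique_lt indep_le]] := ramsey3_witness ramsey lt_R.
pose a := r + 1 - m.
apply: (Fv_le_of_graph (e := @join_complete 'I_a _ eG)).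
  by rewrite card_sum !card_ord /a; lia.
split.
- exact: simple_join.
- have -> : r = #|'I_a| + (m - 1) by rewrite card_ord /a; lia.
  by apply: join_vertex_arrow => //; rewrite card_ord; lia.
- apply: leq_trans (join_clique_number_lt _ clique_lt) _.
  by rewrite card_ord /a; lia.
Qed.
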